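(* Let $n$ be even, $1\le q_n\le n/2$, $I_n=\{(i_1,\dots,i_{q_n}):1\le i_1<\dots<i_{q_n}\le n\}$, and for $R=(i_1,\dots,i_{q_n})\in I_n$ let $\Psi_R=\psi_{i_1}\cdots\psi_{i_{q_n}}\,i^{\lfloor q_n/2\rfloor}$. Let $\alpha:[k]\to I_n$ and write $\Psi_\alpha=\Psi_{\alpha(1)}\cdots\Psi_{\alpha(k)}$. Then: (i) if every block of $\ker\alpha$ has even size, then $\Psi_\alpha=\pm I$; (ii) for every pair partition $\pi\in\mathcal{P}_2(k)$ with $\ker\alpha\ge\pi$, $$\operatorname{tr}(\Psi_\alpha)=(-1)^{q_n\,cr(\pi)+\sum|\alpha(V)\cap\alpha(W)|},$$ where the sum runs over all unordered pairs $\{V,W\}$ of crossing blocks of $\pi$.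
   Context: $\psi_1,\dots,\psi_n$ are Majorana fermions: $2^{n/2}\times2^{n/2}$ matrices with $\psi_i\psi_j+\psi_j\psi_i=2\delta_{ij}I$, realized as $\psi_j=\sigma_3^{\otimes(j-1)}\otimes\sigma_1\otimes 1^{\otimes(n/2-j)}$, $\psi_{n/2+j}=\sigma_3^{\otimes(j-1)}\otimes\sigma_2\otimes 1^{\otimes(n/2-j)}$ with Pauli matrices. $\operatorname{tr}$ is the normalized trace. $\ker\alpha$ is the partition of $[k]=\{1,\dots,k\}$ into nonempty level sets of $\alpha$; for a block $B$ of $\ker\alpha$ (or of a partition below it), $\alpha(B)$ is the common value of $\alpha$ on $B$. $\pi\le\sigma$ means every block of $\pi$ is contained in a block of $\sigma$. $\mathcal{P}_2(k)$ is the set of pair partitions of $[k]$; blocks $\{v_1<v_2\},\{w_1<w_2\}$ cross if $v_1<w_1<v_2<w_2$ or $w_1<v_1<w_2<v_2$, and $cr(\pi)$ is the number of crossing pairs of blocks. For $Q,R\in I_n$, $|Q\cap R|$ is the number of common indices. *)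

From HB Require Import structures.
From mathcomp Require Import all_boot all_order all_algebra all_field.
From mathcomp Require Import mxtens.
Set Implicit Arguments. Unset Strict Implicit. Unset Printing Implicit Defensive.
Import Order.TTheory GRing.Theory Num.Theory.
Local Open Scope ring_scope.

Definition sigma1 : 'M[algC]_2 := \matrix_(i < 2, j < 2) (if i == j then 0 else 1).
Definition sigma2 : 'M[algC]_2 :=
  \matrix_(i < 2, j < 2)
    (if i == j then 0 else if (i : nat) == 0%N then - 'i else 'i).
Definition sigma3 : 'M[algC]_2 :=
  \matrix_(i < 2, j < 2) (if i == j then (if (i : nat) == 0%N then 1 else -1) else 0).

Fixpoint kronf (m : nat) (f : nat -> 'M[algC]_2) : 'M[algC]_(2 ^ m) :=
  match m return 'M[algC]_(2 ^ m) with
  | 0%N => 1%:M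
  | m'.+1 => castmx (esym (expnS 2 m'), esym (expnS 2 m'))
                    (tensmx (f 0%N) (kronf m' (fun p => f p.+1)))
  end.

(* Majorana fermions psi_1..psi_n for n = 2m, indexed 0-based by 'I_n:
   index i (= psi_{i+1}) with i < m : sigma3^(i) (x) sigma1 (x) 1^(m-i-1);
   index i with i >= m, i' = i - m : sigma3^(i') (x) sigma2 (x) 1^(m-i'-1). *)
Definition majorana (n : nat) (i : 'I_n) : 'M[algC]_(2 ^ (n %/ 2)) :=
  let m := (n %/ 2)%N in
  if (i < m)%N then
    kronf m (fun p => if (p < i)%N then sigma3 else if p == i then sigma1 else 1%:M)
  else
    kronf m (fun p => if (p < i - m)%N then sigma3
                      else if p == (i - m)%N then sigma2 else 1%:M).

Definition ntr (N : nat) (A : 'M[algC]_N) : algC := \tr A / N%:R.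

(* Psi_R for R = {i_1 < ... < i_q} (a q-subset of the index set):
   psi_{i_1} ... psi_{i_q} * i^(floor(q/2)); enum R lists R increasingly. *)
Definition PsiR (n q : nat) (R : {set 'I_n}) : 'M[algC]_(2 ^ (n %/ 2)) :=
  ('i ^+ (q %/ 2)) *: \prod_(i <- enum R) majorana i.

Definition Psi_alpha (n q k : nat) (alpha : 'I_k -> {set 'I_n}) :
  'M[algC]_(2 ^ (n %/ 2)) := \prod_(j < k) PsiR q (alpha j).

Definition ker_blocks_even (n k : nat) (alpha : 'I_k -> {set 'I_n}) : Prop :=
  forall j : 'I_k, ~~ odd #|[set l | alpha l == alpha j]|.

Definition pair_partition (k : nat) (pi : {set {set 'I_k}}) : Prop :=
  partition pi [set: 'I_k] /\ forall B, B \in pi -> #|B| = 2%N.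

Definition ker_ge (n k : nat) (alpha : 'I_k -> {set 'I_n}) (pi : {set {set 'I_k}}) : Prop :=
  forall B, B \in pi -> forall x y, x \in B -> y \in B -> alpha x = alpha y.

(* alpha(B): the common value of alpha on the (nonempty) block B *)
Definition alpha_blk (n k : nat) (alpha : 'I_k -> {set 'I_n}) (B : {set 'I_k}) : {set 'I_n} :=
  if [pick x in B] is Some x then alpha x else set0.

Definition crosses (k : nat) (V W : {set 'I_k}) : bool :=
  [exists v1 : 'I_k, exists v2 : 'I_k, exists w1 : 'I_k, exists w2 : 'I_k,
     [&& V == [set v1; v2], W == [set w1; w2], (v1 < v2)%N, (w1 < w2)%N &
         ((v1 < w1 < v2)%N && (v2 < w2)%N) || ((w1 < v1 < w2)%N && (w2 < v2)%N)]].

(* ordered pairs (V, W) of crossing blocks of pi; each unordered crossing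
   pair {V, W} appears exactly twice, as (V, W) and (W, V). *)
Definition cross_pairs (k : nat) (pi : {set {set 'I_k}}) : {set {set 'I_k} * {set 'I_k}} :=
  [set VW | [&& VW.1 \in pi, VW.2 \in pi & crosses VW.1 VW.2]].

Definition cr (k : nat) (pi : {set {set 'I_k}}) : nat := (#|cross_pairs pi| %/ 2)%N.

Definition cross_overlap (n k : nat) (alpha : 'I_k -> {set 'I_n}) (pi : {set {set 'I_k}}) : nat :=
  ((\sum_(VW in cross_pairs pi)
      #|alpha_blk alpha VW.1 :&: alpha_blk alpha VW.2|) %/ 2)%N.

From HB Require Import structures.
From mathcomp Require Import all_boot all_order all_algebra all_field.
From mathcomp Require Import mxtens zify.
Import Order.TTheory GRing.Theory Num.Theory.
Local Open Scope ring_scope.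

Set Implicit Arguments. Unset Strict Implicit. Unset Printing Implicit Defensive.

(* The Majorana operators are anticommuting involutions: as Kronecker products
   of Pauli matrices, two distinct ones anticommute in exactly one tensor
   factor.  Hence each Psi_R with |R| = q squares to 1 and
   Psi_R Psi_S = (-1)^(q + |R :&: S|) Psi_S Psi_R, so Psi_alpha is a word in
   involutions that commute up to known signs.  If every letter occurs an even
   number of times, cancelling each letter against a later equal one leaves a
   sign.  For a pair partition pi <= ker alpha, move the first letter of the
   word to its partner and cancel the two: the sign collected comes from the
   letters in between; those whose partners also lie in between contribute an
   even exponent, the others are exactly the blocks crossing the removed one.
   By induction Psi_alpha is the sign
   (-1)^(sum over crossing pairs {V, W} of q + |alpha(V) :&: alpha(W)|)
   times the identity, and its normalized trace is that sign. *)

Ltac pauli_by_entries :=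
  apply/matrixP => - [[|[|?]] ?] [[|[|?]] ?] //;
  rewrite !mxE !big_ord_recr !big_ord0 /= !mxE /=;
  rewrite ?mulr0 ?mul0r ?mulr1 ?mul1r ?add0r ?addr0 ?mulN1r ?mulrN1 ?opprK ?oppr0;
  rewrite ?mulrN ?mulNr -?expr2 ?sqrCi ?opprK ?oppr0 //.

Lemma sigma1_sq : sigma1 *m sigma1 = 1%:M. Proof. pauli_by_entries. Qed.
Lemma sigma2_sq : sigma2 *m sigma2 = 1%:M. Proof. pauli_by_entries. Qed.
Lemma sigma3_sq : sigma3 *m sigma3 = 1%:M. Proof. pauli_by_entries. Qed.
Lemma sigma13_anticomm : sigma1 *m sigma3 = - (sigma3 *m sigma1).
Proof. pauli_by_entries. Qed.
Lemma sigma23_anticomm : sigma2 *m sigma3 = - (sigma3 *m sigma2).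
Proof. pauli_by_entries. Qed.
Lemma sigma12_anticomm : sigma1 *m sigma2 = - (sigma2 *m sigma1).
Proof. pauli_by_entries. Qed.

Section SquareCast.
Variables (R : pzRingType) (a b : nat) (e : a = b).

Lemma castmx_mul_sq (A B : 'M[R]_a) :
  castmx (e, e) A *m castmx (e, e) B = castmx (e, e) (A *m B).
Proof. by case: b / e. Qed.

Lemma castmx_scale c (A : 'M[R]_a) : castmx (e, e) (c *: A) = c *: castmx (e, e) A.
Proof. by case: b / e. Qed.

Lemma castmx1 : castmx (e, e) (1%:M : 'M[R]_a) = 1%:M.
Proof. by case: b / e. Qed.

End SquareCast.

Section Tensor.
Variables (R : comPzRingType) (m1 n1 m2 n2 : nat).

Lemma tensmxZl c (A : 'M[R]_(m1, n1)) (B : 'M[R]_(m2, n2)) :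
  tensmx (c *: A) B = c *: tensmx A B.
Proof. by apply/matrixP => i j; rewrite !mxE mulrA. Qed.

Lemma tensmxZr c (A : 'M[R]_(m1, n1)) (B : 'M[R]_(m2, n2)) :
  tensmx A (c *: B) = c *: tensmx A B.
Proof. by apply/matrixP => i j; rewrite !mxE mulrCA. Qed.

Lemma tensmx1 : tensmx (1%:M : 'M[R]_m1) (1%:M : 'M[R]_m2) = 1%:M.
Proof.
apply/matrixP => i j.
case: (mxtens_indexP i) => i1 i2; case: (mxtens_indexP j) => j1 j2.
rewrite tensmxE !mxE (inj_eq (can_inj (@mxtens_indexK _ _))) xpair_eqE.
by case: eqP; case: eqP; rewrite ?mulr1 ?mulr0 ?mul0r.
Qed.

End Tensor.

Lemma eq_kronf m f g : (forall p, (p < m)%N -> f p = g p) -> kronf m f = kronf m g.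
Proof.
elim: m f g => [|m IHm] f g fg //=.
by rewrite fg // (IHm _ (fun p => g p.+1)) // => p lt_pm; apply: fg.
Qed.

Lemma kronf_mulmx m f g : kronf m f *m kronf m g = kronf m (fun p => f p *m g p).
Proof.
elim: m f g => [|m IHm] f g /=; first by rewrite mul1mx.
by rewrite castmx_mul_sq tensmx_mul IHm.
Qed.

Lemma kronf1 m : kronf m (fun _ => 1%:M) = 1%:M.
Proof. by elim: m => //= m ->; rewrite tensmx1 castmx1. Qed.

Lemma kronf_scale_at m f r c : (r < m)%N ->
  kronf m (fun p => if p == r then c *: f p else f p) = c *: kronf m f.
Proof.
elim: m f r => [|m IHm] f [|r] //= lt_rm.
  by rewrite tensmxZl castmx_scale.
by rewrite -castmx_scale -tensmxZr -(IHm _ r).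
Qed.

Definition majorana_factor (first : bool) (r p : nat) : 'M[algC]_2 :=
  if (p < r)%N then sigma3
  else if p == r then (if first then sigma1 else sigma2) else 1%:M.

Lemma majoranaE n (i : 'I_n) : majorana i =
  kronf (n %/ 2) (majorana_factor (i < n %/ 2)%N
                    (if (i < n %/ 2)%N then i : nat else i - n %/ 2)%N).
Proof. by rewrite /majorana; case: ifP. Qed.

Lemma majorana_factor_sq b r p : majorana_factor b r p *m majorana_factor b r p = 1%:M.
Proof.
rewrite /majorana_factor; case: ifP => _; last case: ifP => _.
- exact: sigma3_sq.
- by case: b; [exact: sigma1_sq | exact: sigma2_sq].
- exact: mul1mx.
Qed.

Lemma majorana_factor_comm b1 r1 b2 r2 p : p != minn r1 r2 ->
  majorana_factor b1 r1 p *m majorana_factor b2 r2 p =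
  majorana_factor b2 r2 p *m majorana_factor b1 r1 p.
Proof.
rewrite /majorana_factor => p_min.
have [?|?] := ltnP p r1; have [?|?] := ltnP p r2;
  have [?|?] := eqVneq p r1; have [?|?] := eqVneq p r2;
  rewrite ?mulmx1 ?mul1mx //; lia.
Qed.

Lemma majorana_factor_anticomm b1 r1 b2 r2 : (r1 != r2) || (b1 != b2) ->
  majorana_factor b1 r1 (minn r1 r2) *m majorana_factor b2 r2 (minn r1 r2) =
  - (majorana_factor b2 r2 (minn r1 r2) *m majorana_factor b1 r1 (minn r1 r2)).
Proof.
rewrite /majorana_factor; case: (ltngtP r1 r2) => [lt12 _|lt21 _|<- neq].
- rewrite ltnn eqxx lt12.
  by case: b1; rewrite ?sigma13_anticomm ?sigma23_anticomm.
- rewrite ltnn eqxx lt21.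
  by case: b2; rewrite ?sigma13_anticomm ?sigma23_anticomm opprK.
- rewrite ltnn ?eqxx; move: neq; rewrite ?eqxx /=.
  by case: b1; case: b2 => //= _; rewrite sigma12_anticomm ?opprK.
Qed.

Lemma kronf_majorana_anticomm m b1 r1 b2 r2 :
  (r1 < m)%N -> (r1 != r2) || (b1 != b2) ->
  kronf m (majorana_factor b1 r1) *m kronf m (majorana_factor b2 r2) =
  - (kronf m (majorana_factor b2 r2) *m kronf m (majorana_factor b1 r1)).
Proof.
move=> lt1m neq; have lt_min : (minn r1 r2 < m)%N by rewrite gtn_min lt1m.
rewrite !kronf_mulmx -scaleN1r -(@kronf_scale_at m _ (minn r1 r2)) //.
apply: eq_kronf => p _; case: eqP => [->|/eqP p_min].
  by rewrite majorana_factor_anticomm // scaleN1r.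
exact: majorana_factor_comm.
Qed.

Lemma majorana_sq n (i : 'I_n) : majorana i *m majorana i = 1%:M.
Proof.
rewrite majoranaE kronf_mulmx -(kronf1 (n %/ 2)).
by apply: eq_kronf => p _; apply: majorana_factor_sq.
Qed.

Lemma majorana_anticomm n (i j : 'I_n) : ~~ odd n -> i != j ->
  majorana i *m majorana j = - (majorana j *m majorana i).
Proof.
move=> even_n neq_ij; rewrite !majoranaE.
have n_mod2 : (n %% 2 = 0)%N by rewrite modn2 (negbTE even_n).
have neq_val : (i : nat) <> j by move=> eq_ij; rewrite (val_inj eq_ij) eqxx in neq_ij.
have lt_in := ltn_ord i; have lt_jn := ltn_ord j.
apply: kronf_majorana_anticomm; first by case: (ltnP i (n %/ 2)) => ? /=; lia.
have [lt_ih|ge_ih] := ltnP i (n %/ 2); have [lt_jh|ge_jh] := ltnP j (n %/ 2);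
  rewrite /= ?orbF ?orbT //; apply/eqP; lia.
Qed.

Lemma mulr_signCA (R : pzRingType) c (X Y : R) : X * ((-1) ^+ c * Y) = (-1) ^+ c * (X * Y).
Proof. by rewrite mulrA (commr_sign X) mulrA. Qed.

Section SignCommuting.
Variables (R : pzRingType) (I : eqType) (x : I -> R) (e : I -> I -> nat).
Hypothesis x_sign_comm : forall a c, x a * x c = (-1) ^+ e a c * (x c * x a).

Lemma mul_prod_sign a s :
  x a * \prod_(j <- s) x j = (-1) ^+ (\sum_(j <- s) e a j) * (\prod_(j <- s) x j * x a).
Proof.
elim: s => [|b s IHs]; first by rewrite !big_nil expr0 !mulr1 !mul1r.
rewrite !big_cons mulrA x_sign_comm -!mulrA IHs (mulr_signCA _ (x b)).
by rewrite exprD -!mulrA.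
Qed.

Lemma prod_mul_prod_sign s t :
  \prod_(i <- s) x i * \prod_(j <- t) x j =
  (-1) ^+ (\sum_(i <- s) \sum_(j <- t) e i j)%N * (\prod_(j <- t) x j * \prod_(i <- s) x i).
Proof.
elim: s => [|a s IHs]; first by rewrite !big_nil expr0 !mulr1 !mul1r.
rewrite !big_cons -mulrA IHs (mulr_signCA _ (x a)) mulrA mul_prod_sign.
by rewrite addnC exprD -!mulrA.
Qed.

Hypothesis x_sq : forall a, x a * x a = 1.

Lemma prod_cons_sq a s :
  \prod_(j <- a :: s) x j * \prod_(j <- a :: s) x j =
  (-1) ^+ (\sum_(j <- s) e a j) * (\prod_(j <- s) x j * \prod_(j <- s) x j).
Proof.
have sign_sym : \prod_(j <- s) x j * x a =
                 (-1) ^+ (\sum_(j <- s) e a j) * (x a * \prod_(j <- s) x j).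
  by rewrite mul_prod_sign signrMK.
rewrite big_cons -mulrA (mulrA _ (x a)) sign_sym.
by rewrite -!mulrA mulr_signCA (mulrA (x a) (x a)) x_sq mul1r.
Qed.

Lemma prod_cancel_pair a b u v : x b = x a ->
  \prod_(j <- a :: u ++ b :: v) x j = (-1) ^+ (\sum_(c <- u) e a c) * \prod_(j <- u ++ v) x j.
Proof.
move=> xba; rewrite big_cons big_cat big_cons /= mulrA mul_prod_sign -!mulrA xba.
by rewrite (mulrA (x a)) x_sq mul1r -big_cat.
Qed.

Lemma prod_even_fibres_sign (T : eqType) (f : I -> T) s :
  (forall a b, f a = f b -> x a = x b) ->
  (forall j, ~~ odd (count (fun l => f l == f j) s)) ->
  exists m, \prod_(j <- s) x j = (-1) ^+ m.
Proof.
move=> x_f; have [N] := ubnP (size s); elim: N s => // N IHN [|a t] size_t even_fib.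
  by exists 0%N; rewrite big_nil.
have odd_a : odd (count (fun l => f l == f a) t).
  by have := even_fib a; rewrite /= eqxx add1n oddS negbK.
have /hasP[b b_t /eqP fba] : has (fun l => f l == f a) t.
  by rewrite has_count; case: (count _ t) odd_a.
case/splitPr: b_t size_t even_fib => u v size_uv even_fib.
have [m prod_uv] : exists m, \prod_(j <- u ++ v) x j = (-1) ^+ m.
  apply: IHN => [|j]; first by rewrite /= !size_cat /= in size_uv *; lia.
  have := even_fib j; rewrite /= !count_cat /= fba !oddD.
  by case: (f a == f j); case: (odd (count _ u)); case: (odd (count _ v)).
exists (\sum_(c <- u) e a c + m)%N.
by rewrite prod_cancel_pair ?(x_f _ _ fba) // prod_uv exprD.
Qed.

End SignCommuting.

Section AnticommutingInvolutions.
Variables (R : pzRingType) (I : eqType) (psi : I -> R).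
Hypothesis psi_sq : forall i, psi i * psi i = 1.
Hypothesis psi_anticomm : forall i j, i != j -> psi i * psi j = - (psi j * psi i).

Lemma anticomm_sign_comm i j : psi i * psi j = (-1) ^+ (i != j) * (psi j * psi i).
Proof.
have [->|neq_ij] := eqVneq i j; first by rewrite expr0 mul1r.
by rewrite psi_anticomm // expr1 mulN1r.
Qed.

Lemma prod_sq_anticomm s :
  uniq s -> \prod_(i <- s) psi i * \prod_(i <- s) psi i = (-1) ^+ 'C(size s, 2).
Proof.
elim: s => [|a s IHs]; first by rewrite big_nil mulr1 expr0.
rewrite cons_uniq => /andP[a_s uniq_s].
have sum_neq : (\sum_(j <- s) (a != j) = size s)%N.
  by rewrite -sum1_size big_seq [RHS]big_seq; apply: eq_bigr => j j_s; rewrite eq_sym (memPn a_s).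
by rewrite (prod_cons_sq anticomm_sign_comm psi_sq) IHs // -exprD sum_neq binS bin1 addnC.
Qed.

End AnticommutingInvolutions.

Section PairedProducts.
Variables (R : pzRingType) (k : nat) (x : 'I_k -> R) (e : 'I_k -> 'I_k -> nat).
Hypothesis x_sign_comm : forall a c, x a * x c = (-1) ^+ e a c * (x c * x a).
Hypothesis x_sq : forall a, x a * x a = 1.
Variable p : 'I_k -> 'I_k.
Hypothesis pK : involutive p.
Hypothesis p_neq : forall a, p a != a.
Hypothesis x_p : forall a, x (p a) = x a.
Hypothesis e_p : forall a c, e a (p c) = e a c.

Local Notation ord_lt := (fun a b : 'I_k => (a < b)%N).

Definition crossing (a c : 'I_k) := [&& (a < c)%N, (c < p a)%N & (p a < p c)%N].

Definition crossing_exponent (s : seq 'I_k) :=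
  (\sum_(a <- s) \sum_(c <- s | crossing a c) e a c)%N.

Lemma sum_involution_even (w : seq 'I_k) (f : 'I_k -> nat) :
  uniq w -> {in w, forall c, p c \in w} -> (forall c, f (p c) = f c) ->
  ~~ odd (\sum_(c <- w) f c).
Proof.
move=> uniq_w closed_w f_p; rewrite (bigID (fun c : 'I_k => (c < p c)%N)) /=.
suff -> : (\sum_(c <- w | ~~ (c < p c)%N) f c = \sum_(c <- w | (c < p c)%N) f c)%N.
  by rewrite addnn odd_double.
have perm_w : perm_eq w (map p w).
  apply: uniq_perm => //; first by rewrite (map_inj_uniq (can_inj pK)).
  move=> c; apply/idP/mapP => [c_w|[d d_w ->]]; last exact: closed_w.
  by exists (p c); [exact: closed_w | rewrite pK].
rewrite (perm_big _ perm_w) big_map; apply: eq_big => c; last by rewrite f_p.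
by rewrite pK -leqNgt leq_eqVlt val_eqE eq_sym (negbTE (p_neq c)).
Qed.

Section RemoveFirstPair.
Variables (a0 : 'I_k) (u v : seq 'I_k).
Local Notation b0 := (p a0).
Local Notation s := (a0 :: u ++ b0 :: v).
Hypothesis sorted_s : pairwise ord_lt s.
Hypothesis closed_s : {in s, forall j, p j \in s}.

Let a0_lt : {in u ++ b0 :: v, forall c : 'I_k, (a0 < c)%N}.
Proof. by move: sorted_s; rewrite pairwise_cons => /andP[/allP]. Qed.

Let u_lt_b0 : {in u, forall c : 'I_k, (c < b0)%N}.
Proof.
by move: sorted_s; rewrite pairwise_cons pairwise_cat allrel_consr => /and4P[_ /andP[/allP]].
Qed.

Let b0_lt_v : {in v, forall c : 'I_k, (b0 < c)%N}.
Proof.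
by move: sorted_s; rewrite pairwise_cons pairwise_cat pairwise_cons => /and4P[_ _ _ /andP[/allP]].
Qed.

Lemma sorted_remove_pair : pairwise ord_lt (u ++ v).
Proof.
move: sorted_s; rewrite pairwise_cons !pairwise_cat pairwise_cons allrel_consr.
by case/and4P => _ /andP[_ -> ] -> /andP[_ ->].
Qed.

Let sub_uv c : c \in u ++ v -> c \in u ++ b0 :: v.
Proof. by rewrite !mem_cat in_cons => /orP[] ->; rewrite ?orbT. Qed.

Let a0_notin : a0 \notin u ++ v.
Proof. by apply/negP => /sub_uv/a0_lt; rewrite ltnn. Qed.

Let b0_notin : b0 \notin u ++ v.
Proof.
by rewrite mem_cat; apply/norP; split; apply/negP; [move/u_lt_b0 | move/b0_lt_v]; rewrite ltnn.
Qed.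

Lemma closed_remove_pair : {in u ++ v, forall j, p j \in u ++ v}.
Proof.
move=> j j_uv; have j_s : j \in s by rewrite in_cons sub_uv ?orbT.
have := closed_s j_s.
rewrite in_cons mem_cat in_cons => /or4P[/eqP pj_a0|pj_u|/eqP pj_b0|pj_v].
- by case/negP: b0_notin; rewrite -pj_a0 pK.
- by rewrite mem_cat pj_u.
- by case/negP: a0_notin; rewrite -[a0]pK -pj_b0 pK.
- by rewrite mem_cat pj_v orbT.
Qed.

Let a0_min : {in s, forall c : 'I_k, (a0 <= c)%N}.
Proof. by move=> c; rewrite in_cons => /orP[/eqP -> // | /a0_lt /ltnW]. Qed.

Lemma crossing_exponent_remove_pair :
  crossing_exponent s = (\sum_(c <- u | (b0 < p c)%N) e a0 c + crossing_exponent (u ++ v))%N.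
Proof.
have row_a0 : (\sum_(c <- s | crossing a0 c) e a0 c = \sum_(c <- u | (b0 < p c)%N) e a0 c)%N.
  rewrite big_cons /crossing ltnn /= big_cat big_cons /= ltnn andbF /=.
  rewrite [X in (_ + X)%N]big_hasC ?addn0; last first.
    by apply/hasPn => c /b0_lt_v lt_b0c; rewrite /= (leq_gtF (ltnW lt_b0c)) andbF.
  rewrite big_seq_cond [RHS]big_seq_cond; apply: eq_bigl => c.
  case: (boolP (c \in u)) => //= c_u; have c_s : c \in u ++ b0 :: v by rewrite mem_cat c_u.
  by rewrite (a0_lt c_s) (u_lt_b0 c_u).
have row_b0 : (\sum_(c <- s | crossing b0 c) e b0 c = 0)%N.
  by apply: big_hasC; apply/hasPn => c c_s; rewrite /crossing pK (leq_gtF (a0_min c_s)) andbF.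
have row_uv : {in u ++ v, forall a,
    \sum_(c <- s | crossing a c) e a c = \sum_(c <- u ++ v | crossing a c) e a c}%N.
  move=> a a_uv; have a_s : a \in s by rewrite in_cons sub_uv ?orbT.
  rewrite big_cons [crossing a a0]/crossing (leq_gtF (ltnW (a0_lt (sub_uv a_uv)))) /=.
  rewrite big_cat big_cons [crossing a b0]/crossing pK.
  by rewrite (leq_gtF (a0_min (closed_s a_s))) !andbF /= -big_cat.
rewrite /crossing_exponent big_cons row_a0; congr (_ + _)%N.
rewrite !big_cat big_cons row_b0 /= add0n.
by congr (_ + _)%N; apply: eq_big_seq => a a_in; apply: row_uv; rewrite mem_cat a_in ?orbT.
Qed.

Lemma odd_sum_remove_pair :
  odd (\sum_(c <- u) e a0 c) = odd (\sum_(c <- u | (b0 < p c)%N) e a0 c).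
Proof.
rewrite (bigID (fun c : 'I_k => (b0 < p c)%N)) /= oddD.
suff /negbTE -> : ~~ odd (\sum_(c <- u | ~~ (b0 < p c)%N) e a0 c) by rewrite addbF.
have uniq_u : uniq u.
  by have := pairwise_uniq (fun c : 'I_k => ltnn c) sorted_remove_pair; rewrite cat_uniq => /andP[].
rewrite -big_filter; apply: sum_involution_even => [|c|c]; last exact: e_p.
  exact: filter_uniq.
rewrite !mem_filter pK => /andP[not_b0_lt c_u].
have c_uv : c \in u ++ v by rewrite mem_cat c_u.
have := closed_remove_pair c_uv; rewrite mem_cat => /orP[pc_u|/b0_lt_v].
  by rewrite pc_u andbT -leqNgt (ltnW (u_lt_b0 c_u)).
by rewrite (negbTE not_b0_lt).
Qed.

End RemoveFirstPair.

Lemma prod_paired_sign s : pairwise ord_lt s -> {in s, forall j, p j \in s} ->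
  \prod_(j <- s) x j = (-1) ^+ crossing_exponent s.
Proof.
have [N] := ubnP (size s); elim: N s => // N IHN [|a0 t] size_s sorted_s closed_s.
  by rewrite big_nil /crossing_exponent big_nil.
have pa0_t : p a0 \in t.
  by have := closed_s a0 (mem_head _ _); rewrite in_cons (negbTE (p_neq a0)).
case/splitPr: pa0_t size_s sorted_s closed_s => u v size_s sorted_s closed_s.
have size_uv : (size (u ++ v) < N)%N by rewrite /= !size_cat /= in size_s *; lia.
rewrite (@prod_cancel_pair _ _ _ _ x_sign_comm x_sq a0 (p a0) u v (x_p a0)).
rewrite (IHN _ size_uv (sorted_remove_pair sorted_s) (closed_remove_pair sorted_s closed_s)).
rewrite crossing_exponent_remove_pair // -exprD -[LHS]signr_odd -[RHS]signr_odd !oddD.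
by rewrite (odd_sum_remove_pair sorted_s closed_s).
Qed.

End PairedProducts.

(* ['M[R]_N] is a ring for every [N] but an [lalgType] only for [N] of the
   form [n.+1], so [scalerAl] and [scalerAr] do not apply to it. *)
Section SquareMatrixRing.
Variables (R : comPzRingType) (N : nat).
Implicit Types A B : 'M[R]_N.

Lemma scalerAl_mx a A B : a *: (A * B) = a *: A * B.
Proof. exact: scalemxAl. Qed.

Lemma scalerAr_mx a A B : a *: (A * B) = A * (a *: B).
Proof. exact: scalemxAr. Qed.

Lemma scalemx_sign m A : (-1) ^+ m *: A = (-1) ^+ m * A.
Proof. by rewrite -(@signr_odd R m) -(@signr_odd 'M[R]_N m) scaler_sign mulr_sign. Qed.

End SquareMatrixRing.

Lemma even_half_add_bin2 m : ~~ odd (m %/ 2 + 'C(m, 2)).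
Proof.
elim/ltn_ind: m => -[|[|m]] IHm //.
have bin2SS : 'C(m.+2, 2) = ('C(m, 2) + (m + m.+1))%N by rewrite !binS !bin1 bin0; lia.
have half_SS : (m.+2 %/ 2 = m %/ 2 + 1)%N by rewrite -addn2 divnDr ?dvdnn // divnn.
rewrite bin2SS half_SS addnACA oddD (negbTE (IHm m (ltnW (ltnSn _)))) /=.
by rewrite add0n addnS oddS addnn odd_double.
Qed.

Lemma sum_neq_card (T : finType) (i : T) (S : {set T}) :
  (\sum_(j <- enum S) (i != j) + (i \in S) = #|S|)%N.
Proof.
rewrite cardE -(count_predC (pred1 i)) count_uniq_mem ?enum_uniq // mem_enum addnC.
congr (_ + _)%N; rewrite -sum1_count [RHS]big_mkcond.
by apply: eq_bigr => j _; rewrite /= eq_sym; case: (j == i).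
Qed.

Lemma odd_sum_neq (T : finType) (R S : {set T}) :
  odd (\sum_(i <- enum R) \sum_(j <- enum S) (i != j)) = odd (#|R| * #|S| + #|R :&: S|).
Proof.
have card_RS : #|R :&: S| = (\sum_(i in R) (i \in S))%N.
  rewrite -sum1_card (eq_bigl (fun i => (i \in R) && (i \in S))) => [|i]; last by rewrite in_setI.
  by rewrite -big_mkcondr.
have sum_RS : (\sum_(i <- enum R) \sum_(j <- enum S) (i != j) + #|R :&: S| = #|R| * #|S|)%N.
  rewrite card_RS big_enum -big_split -sum_nat_const /=.
  by apply: eq_bigr => i _; rewrite sum_neq_card.
by rewrite -sum_RS -addnA oddD addnn odd_double addbF.
Qed.

Section PsiR.
Variables (n q : nat).
Hypothesis even_n : ~~ odd n.
Local Notation N := (2 ^ (n %/ 2))%N.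

Let majorana_sqr (i : 'I_n) : (majorana i : 'M[algC]_N) * majorana i = 1.
Proof. exact: majorana_sq. Qed.

Let majorana_anticommr (i j : 'I_n) :
  i != j -> (majorana i : 'M[algC]_N) * majorana j = - (majorana j * majorana i).
Proof. exact: majorana_anticomm. Qed.

(* The normalisation i^(q/2) is what makes Psi_R an involution. *)
Lemma PsiR_sq (R : {set 'I_n}) : #|R| = q -> PsiR q R * PsiR q R = 1.
Proof.
move=> card_R; rewrite /PsiR -scalerAl_mx -scalerAr_mx scalerA -exprD addnn -mul2n exprM sqrCi.
rewrite (prod_sq_anticomm majorana_sqr majorana_anticommr) ?enum_uniq // -cardE card_R.
by rewrite scalemx_sign -exprD -signr_odd (negbTE (even_half_add_bin2 q)).
Qed.

Lemma PsiR_comm (R S : {set 'I_n}) : #|R| = q -> #|S| = q ->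
  PsiR q R * PsiR q S = (-1) ^+ (q + #|R :&: S|) * (PsiR q S * PsiR q R).
Proof.
move=> card_R card_S; rewrite /PsiR -!scalerAl_mx -!scalerAr_mx.
rewrite (prod_mul_prod_sign (anticomm_sign_comm majorana_anticommr)) !scalerA mulrC.
by rewrite -signr_odd odd_sum_neq card_R card_S oddD oddM andbb -oddD signr_odd.
Qed.

End PsiR.

Lemma set2_ltn_inj k (a b c d : 'I_k) : (a < b)%N -> (c < d)%N ->
  [set a; b] = [set c; d] -> a = c /\ b = d.
Proof.
move=> lt_ab lt_cd eq_ab_cd.
have := set21 a b; have := set22 a b; have := set21 c d.
rewrite -{1}eq_ab_cd eq_ab_cd !in_set2.
by do 3 case/orP => /eqP ?; subst => //; lia.
Qed.

Lemma crosses_set2 k (a b c d : 'I_k) : (a < b)%N -> (c < d)%N ->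
  crosses [set a; b] [set c; d] = ((a < c < b)%N && (b < d)%N) || ((c < a < d)%N && (d < b)%N).
Proof.
move=> lt_ab lt_cd; apply/existsP/idP.
  case=> v1 /existsP[v2 /existsP[w1 /existsP[w2 /and5P[/eqP eq_v /eqP eq_w lt_v lt_w]]]].
  by case: (set2_ltn_inj lt_ab lt_v eq_v) => <- <-; case: (set2_ltn_inj lt_cd lt_w eq_w) => <- <-.
move=> cross; exists a; apply/existsP; exists b; apply/existsP; exists c; apply/existsP; exists d.
by rewrite !eqxx lt_ab lt_cd cross.
Qed.

Section PairPartition.
Variables (k : nat) (pi : {set {set 'I_k}}).
Hypothesis pi_pair : pair_partition pi.

Let pi_trivIset : trivIset pi.
Proof. by case: pi_pair => /and3P[]. Qed.

Let pi_cover j : j \in cover pi.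
Proof. by case: pi_pair => /and3P[/eqP -> _ _]; rewrite inE. Qed.

Lemma pblock_pair_mem j : pblock pi j \in pi.
Proof. exact: pblock_mem (pi_cover j). Qed.

Lemma mem_pblock_pair j : j \in pblock pi j.
Proof. by rewrite mem_pblock pi_cover. Qed.

Let card_pblock j : #|pblock pi j| = 2%N.
Proof. by case: pi_pair => _; apply; apply: pblock_pair_mem. Qed.

Definition partner (j : 'I_k) : 'I_k := odflt j [pick i in pblock pi j :\ j].

Lemma partner_pblock j : partner j \in pblock pi j /\ partner j != j.
Proof.
rewrite /partner; case: pickP => [i|none] /=; first by rewrite in_setD1 => /andP[-> ->].
by have := card_pblock j; rewrite (cardsD1 j) mem_pblock_pair (eq_card0 none).
Qed.

Lemma partner_neq j : partner j != j.
Proof. by case: (partner_pblock j). Qed.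

Lemma pblock_pairE j : pblock pi j = [set j; partner j].
Proof.
apply/eqP; rewrite eq_sym eqEcard subUset !sub1set mem_pblock_pair (proj1 (partner_pblock j)).
by rewrite card_pblock cards2 eq_sym partner_neq.
Qed.

Lemma partnerK : involutive partner.
Proof.
move=> j; have [pj_j _] := partner_pblock j.
have := proj1 (partner_pblock (partner j)).
rewrite (same_pblock pi_trivIset pj_j) pblock_pairE in_set2.
by case/orP=> /eqP // eq_ppj; move: (partner_neq (partner j)); rewrite eq_ppj eqxx.
Qed.

Local Notation opener := [set a : 'I_k | (a < partner a)%N].
Local Notation pair_of a := [set a; partner a].

Lemma pair_partitionE : pi = [set pair_of a | a in opener].
Proof.
apply/setP => B; apply/idP/imsetP => [B_pi|[a _ ->]]; last by rewrite -pblock_pairE pblock_pair_mem.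
have [j j_B] : exists j, j \in B.
  apply/set0Pn; case: pi_pair => /and3P[_ _ set0_pi] _.
  by apply: contraNneq set0_pi => <-.
have eq_B : B = pair_of j by rewrite -pblock_pairE (def_pblock pi_trivIset B_pi j_B).
have /orP[lt_j|lt_pj] : (j < partner j)%N || (partner j < j)%N.
  by rewrite -neq_ltn; apply: contraNneq (partner_neq j) => /val_inj <-.
- by exists j; rewrite ?inE.
- by exists (partner j); rewrite ?inE partnerK // eq_B setUC.
Qed.

Let pair_of_inj : {in opener &, injective (fun a => pair_of a)}.
Proof. by move=> a c; rewrite !inE => lt_a lt_c /(set2_ltn_inj lt_a lt_c)[]. Qed.

Lemma crossing_opener a c : crossing partner a c -> (a \in opener) && (c \in opener).
Proof.
case/and3P=> lt_ac lt_cpa lt_pac.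
by rewrite !inE (ltn_trans lt_ac lt_cpa) (ltn_trans lt_cpa lt_pac).
Qed.

Lemma crosses_pair_of a c : a \in opener -> c \in opener ->
  crosses (pair_of a) (pair_of c) = crossing partner a c || crossing partner c a.
Proof. by rewrite !inE => lt_a lt_c; rewrite crosses_set2 // /crossing !andbA. Qed.

Lemma sum_cross_pairs (g : {set 'I_k} -> {set 'I_k} -> nat) : (forall V W, g V W = g W V) ->
  (\sum_(VW in cross_pairs pi) g VW.1 VW.2 =
   2 * \sum_a \sum_(c | crossing partner a c) g (pair_of a) (pair_of c))%N.
Proof.
(* Index the blocks by their smaller element: a crossing pair of blocks then
   appears once as (a, c) and once as (c, a) with [crossing partner] true. *)
move=> g_sym; pose G a c := if crossing partner a c then g (pair_of a) (pair_of c) else 0%N.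
have split_cross a c : a \in opener -> c \in opener ->
    ((if crosses (pair_of a) (pair_of c) then g (pair_of a) (pair_of c) else 0) = G a c + G c a)%N.
  move=> a_O c_O; rewrite crosses_pair_of // /G (g_sym (pair_of c)).
  case: (boolP (crossing partner a c)) => [cr_ac|_];
    case: (boolP (crossing partner c a)) => [cr_ca|_] //=; rewrite ?addn0 ?add0n //.
  by move: cr_ac cr_ca => /and3P[lt_ac _ _] /and3P[lt_ca _ _]; lia.
have G_opener a :
    (\sum_(c in opener) G a c = \sum_(c | crossing partner a c) g (pair_of a) (pair_of c))%N.
  rewrite big_mkcond [RHS]big_mkcond; apply: eq_bigr => c _ /=; rewrite /G.
  case: (boolP (crossing partner a c)) => [cr_ac|_]; last by case: (c \in opener).
  by rewrite (andP (crossing_opener cr_ac)).2.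
rewrite (eq_bigl (fun VW => (VW.1 \in pi) && ((VW.2 \in pi) && crosses VW.1 VW.2))); last first.
  by move=> VW; rewrite inE.
rewrite -(pair_big_dep (fun V => V \in pi) (fun V W => (W \in pi) && crosses V W) g) /=.
under eq_bigr => V _ do rewrite big_mkcondr {1}pair_partitionE big_imset //=.
rewrite pair_partitionE big_imset //=.
under eq_bigr => a a_O do rewrite (eq_bigr _ (fun c => split_cross a c a_O)) big_split /=.
rewrite big_split /= [X in (_ + X)%N]exchange_big /= addnn -mul2n; congr (2 * _)%N.
rewrite big_mkcond; apply: eq_bigr => a _ /=; rewrite G_opener.
case: ifP => // /negbT a_nO; rewrite big_pred0 // => c.
by apply/negbTE; apply: contra a_nO => /crossing_opener /andP[].
Qed.

Lemma ker_ge_partner n (alpha : 'I_k -> {set 'I_n}) :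
  ker_ge alpha pi -> forall a, alpha (partner a) = alpha a.
Proof.
move=> alpha_pi a; apply: (alpha_pi _ (pblock_pair_mem a)); last exact: mem_pblock_pair.
by case: (partner_pblock a).
Qed.

Lemma alpha_blk_pair n (alpha : 'I_k -> {set 'I_n}) a :
  ker_ge alpha pi -> alpha_blk alpha (pair_of a) = alpha a.
Proof.
move=> alpha_pi; rewrite /alpha_blk; case: pickP => [y|none]; last by have := none a; rewrite set21.
by rewrite in_set2 => /orP[] /eqP ->; rewrite ?(ker_ge_partner alpha_pi).
Qed.

Lemma cr_partnerE : cr pi = (\sum_a \sum_(c | crossing partner a c) 1)%N.
Proof. by rewrite /cr -sum1_card (@sum_cross_pairs (fun _ _ => 1%N)) // mulKn. Qed.

Lemma cross_overlap_partnerE n (alpha : 'I_k -> {set 'I_n}) : ker_ge alpha pi ->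
  cross_overlap alpha pi = (\sum_a \sum_(c | crossing partner a c) #|alpha a :&: alpha c|)%N.
Proof.
move=> alpha_pi; rewrite /cross_overlap.
rewrite (@sum_cross_pairs (fun V W => #|alpha_blk alpha V :&: alpha_blk alpha W|)); last first.
  by move=> V W; rewrite setIC.
by rewrite mulKn //; apply: eq_bigr => a _; apply: eq_bigr => c _; rewrite !alpha_blk_pair.
Qed.

End PairPartition.

Lemma index_enumE (T : finType) : index_enum T = enum T.
Proof. by rewrite [index_enum _]unlock enumT. Qed.

Lemma pairwise_ltn_index_enum k : pairwise (fun a b : 'I_k => (a < b)%N) (index_enum 'I_k).
Proof.
rewrite index_enumE -sorted_pairwise; last by move=> b a c; apply: ltn_trans.
by have := iota_ltn_sorted 0 k; rewrite -val_enum_ord sorted_map.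
Qed.

Lemma count_index_enum (T : finType) (P : pred T) : count P (index_enum T) = #|[set x | P x]|.
Proof. by rewrite index_enumE cardsE cardE -size_filter enumT /enum_mem. Qed.

Lemma ntr_sign N m : (0 < N)%N -> ntr ((-1) ^+ m : 'M[algC]_N) = (-1) ^+ m.
Proof.
move=> N_gt0; have -> : (-1) ^+ m = (-1) ^+ m *: (1%:M : 'M[algC]_N).
  by rewrite scalemx_sign; apply/esym/mulmx1.
by rewrite /ntr mxtraceZ mxtrace1 -mulrA mulfV ?mulr1 // pnatr_eq0 -lt0n.
Qed.

Section PsiAlpha.
Variables (n q k : nat) (alpha : 'I_k -> {set 'I_n}).
Hypothesis even_n : ~~ odd n.
Hypothesis card_alpha : forall j, #|alpha j| = q.

Let x j := PsiR q (alpha j).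
Let e a c := (q + #|alpha a :&: alpha c|)%N.

Let x_sq a : x a * x a = 1.
Proof. exact: PsiR_sq. Qed.

Let x_comm a c : x a * x c = (-1) ^+ e a c * (x c * x a).
Proof. exact: PsiR_comm. Qed.

Let Psi_alphaE : Psi_alpha q alpha = \prod_(j <- index_enum 'I_k) x j.
Proof. by []. Qed.

Lemma Psi_alpha_even_ker : ker_blocks_even alpha ->
  Psi_alpha q alpha = 1%:M \/ Psi_alpha q alpha = - 1%:M.
Proof.
move=> even_ker; rewrite Psi_alphaE.
have x_alpha a b : alpha a = alpha b -> x a = x b by rewrite /x => ->.
have [|m ->] := @prod_even_fibres_sign _ _ _ _ x_comm x_sq _ alpha (index_enum 'I_k) x_alpha.
  by move=> j; rewrite count_index_enum.
by rewrite -signr_odd; case: (odd m); [right | left].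
Qed.

Lemma ntr_Psi_alpha_pair_partition pi : pair_partition pi -> ker_ge alpha pi ->
  ntr (Psi_alpha q alpha) = (-1) ^+ (q * cr pi + cross_overlap alpha pi).
Proof.
move=> pi_pair alpha_pi; have alpha_p := ker_ge_partner pi_pair alpha_pi.
have x_p a : x (partner pi a) = x a by rewrite /x alpha_p.
have e_p a c : e a (partner pi c) = e a c by rewrite /e alpha_p.
have closed j (_ : j \in index_enum 'I_k) : partner pi j \in index_enum 'I_k.
  exact: mem_index_enum.
rewrite Psi_alphaE (@prod_paired_sign _ _ _ _ x_comm x_sq _ (partnerK pi_pair) (partner_neq pi_pair)
  x_p e_p _ (pairwise_ltn_index_enum k) closed) ntr_sign ?expn_gt0 //.
rewrite (cr_partnerE pi_pair) (cross_overlap_partnerE pi_pair alpha_pi); congr (_ ^+ _).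
rewrite /crossing_exponent big_distrr -big_split; apply: eq_bigr => a _.
by rewrite big_distrr -big_split; apply: eq_bigr => c _; rewrite /e -[X in (X + _)%N]muln1.
Qed.

End PsiAlpha.

Unset Implicit Arguments.

Theorem lemma3p3 (n q k : nat) (alpha : 'I_k -> {set 'I_n}) :
  ~~ odd n ->
  (1 <= q)%N -> (q <= n %/ 2)%N ->
  (forall j : 'I_k, #|alpha j| = q) ->
  (ker_blocks_even alpha ->
     Psi_alpha q alpha = 1%:M \/ Psi_alpha q alpha = - 1%:M) /\
  (forall pi : {set {set 'I_k}},
     pair_partition pi -> ker_ge alpha pi ->
     ntr (Psi_alpha q alpha) = (-1) ^+ (q * cr pi + cross_overlap alpha pi)).
Proof.
move=> even_n _ _ card_alpha; split.
  exact: Psi_alpha_even_ker.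
by move=> pi; apply: ntr_Psi_alpha_pair_partition.
Qed.
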